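(* Let $P\in\mathbb{R}^{n\times n}$ be a symmetric matrix with $\operatorname{rank}(P)=K$. Suppose $V\in\mathbb{R}^{n\times K}$ satisfies the following three conditions: (i) (Eigenbasis) $V$ is a basis of the column space of $P$, i.e. $V$ has full column rank $K$ and $P=VU^\top$ for some $U\in\mathbb{R}^{n\times K}$; (ii) (Non-negativity) $V_{ik}\ge 0$ for all $i\in[n]$, $k\in[K]$; (iii) (Pure rows) for each $k=1,\dots,K$ there is a row index $i_k$ with $V_{i_k k}>0$ and $V_{i_k j}=0$ for all $j\neq k$. If $\widetilde V\in\mathbb{R}^{n\times K}$ also satisfies (i)–(iii) (with the same $P$), then there exists a permutation matrix $Q\in\{0,1\}^{K\times K}$ such that $\operatorname{supp}(V)=\operatorname{supp}(\widetilde V Q)$.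
   Context: For a matrix $M$, $\operatorname{supp}(M)=\{(i,j): M_{ij}\neq 0\}$ denotes the set of its non-zero entries. $[n]=\{1,\dots,n\}$. *)

From HB Require Import structures.
From mathcomp Require Import all_boot all_order all_algebra all_fingroup.
From mathcomp Require Import reals.
Set Implicit Arguments. Unset Strict Implicit. Unset Printing Implicit Defensive.
Import Order.TTheory GRing.Theory Num.Theory.
Local Open Scope ring_scope.

Definition eigenbasis (R : realType) (n K : nat) (P : 'M[R]_n) (V : 'M[R]_(n, K)) : Prop :=
  \rank V = K /\ exists U : 'M[R]_(n, K), P = V *m U^T.

Definition nonneg_mx (R : realType) (n K : nat) (V : 'M[R]_(n, K)) : Prop :=
  forall i k, 0 <= V i k.

Definition pure_rows (R : realType) (n K : nat) (V : 'M[R]_(n, K)) : Prop :=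
  forall k : 'I_K, exists i : 'I_n, 0 < V i k /\ forall j : 'I_K, j != k -> V i j = 0.

Definition valid_V (R : realType) (n K : nat) (P : 'M[R]_n) (V : 'M[R]_(n, K)) : Prop :=
  eigenbasis P V /\ nonneg_mx V /\ pure_rows V.

Definition same_supp (R : realType) (m p : nat) (M N : 'M[R]_(m, p)) : Prop :=
  forall i j, (M i j != 0) = (N i j != 0).

From HB Require Import structures.
From mathcomp Require Import all_boot all_order all_algebra all_fingroup.
From mathcomp Require Import reals.
Set Implicit Arguments. Unset Strict Implicit. Unset Printing Implicit Defensive.
Import Order.TTheory GRing.Theory Num.Theory.
Local Open Scope ring_scope.

(* Write P = V U^T = Vt Ut^T with V, Vt of full column rank
   K = rank P.  Then the column spaces of V, Vt and P coincide, so
   Vt = V B and V = Vt C for square matrices B, C; full column rank forces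
   B C = C B = 1.  A pure row i_k of V reads Vt(i_k, .) = V(i_k, k) B(k, .)
   with V(i_k, k) > 0, so non-negativity of Vt makes B entrywise
   non-negative, and likewise C.  Mutually inverse non-negative matrices are
   monomial: the support of B is the graph of a permutation f. *)

Section ColumnSpaces.
Variable F : fieldType.

(* Two factorizations P = V U^T = Vt Ut^T through K columns, with
   rank Vt = rank P = K, give Vt = V B: col(Vt) = col(P) <= col(V). *)
Lemma colspace_factor (n K : nat) (P : 'M[F]_n) (V Vt U Ut : 'M[F]_(n, K)) :
  \rank P = K -> \rank Vt = K -> P = V *m U^T -> P = Vt *m Ut^T ->
  exists B : 'M[F]_K, Vt = V *m B.
Proof.
move=> rP rVt PU PUt.
have PV : (P^T <= V^T)%MS by rewrite PU trmx_mul trmxK submxMl.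
have PVt : (P^T <= Vt^T)%MS by rewrite PUt trmx_mul trmxK submxMl.
have VtP : (Vt^T <= P^T)%MS.
  by rewrite -(mxrank_leqif_sup PVt).2 !mxrank_tr rVt rP.
have /submxP [D VtD] := submx_trans VtP PV.
by exists D^T; rewrite -[Vt]trmxK VtD trmx_mul trmxK.
Qed.

Lemma full_col_rank_cancel (n K : nat) (V : 'M[F]_(n, K)) (M : 'M[F]_K) :
  \rank V = K -> V *m M = V -> M = 1%:M.
Proof.
move=> rV VM; have free : row_free V^T by rewrite /row_free mxrank_tr rV.
apply: trmx_inj; apply: (row_free_inj free).
by rewrite /= trmx1 mul1mx -trmx_mul VM.
Qed.

End ColumnSpaces.

Section NonnegativeFactors.
Variable R : numDomainType.

(* If V has a pure row for k and V B is non-negative, then row k of B is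
   non-negative, being a positive rescaling of a row of V B. *)
Lemma pure_row_coeff_ge0 (n K : nat) (V : 'M[R]_(n, K)) (B : 'M[R]_K) k :
  (exists i : 'I_n, 0 < V i k /\ forall j : 'I_K, j != k -> V i j = 0) ->
  (forall i j, 0 <= (V *m B) i j) -> forall j, 0 <= B k j.
Proof.
move=> [i [Vik_gt0 Vi0]] VB_ge0 j.
have VBij : (V *m B) i j = V i k * B k j.
  rewrite mxE (bigD1 k) //= big1 ?addr0 // => l lk.
  by rewrite Vi0 // mul0r.
by have := VB_ge0 i j; rewrite VBij pmulr_rge0.
Qed.

Lemma row_nonzero_of_inverse (K : nat) (C B : 'M[R]_K) k :
  C *m B = 1%:M -> exists j, C k j != 0.
Proof.
move=> CB; case: (pickP (fun j => C k j != 0)) => [j Ckj | C0]; first by exists j.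
have : (C *m B) k k = 0.
  by rewrite mxE big1 // => j _; move/negbFE/eqP: (C0 j) => ->; rewrite mul0r.
by rewrite CB mxE eqxx => /eqP; rewrite oner_eq0.
Qed.

Variables (K : nat) (B C : 'M[R]_K).
Hypotheses (B_ge0 : forall a b, 0 <= B a b) (C_ge0 : forall a b, 0 <= C a b).
Hypotheses (BC : B *m C = 1%:M) (CB : C *m B = 1%:M).

(* An off-diagonal entry of B C = 1 is a sum of non-negative terms, so a
   positive B l j kills the entries C j m with m != l. *)
Lemma inverse_offdiag0 l m j : l != m -> 0 < B l j -> C j m = 0.
Proof.
move=> lm Blj_gt0; have : (B *m C) l m = 0 by rewrite BC mxE (negbTE lm).
rewrite mxE => /eqP; rewrite psumr_eq0 => [|k _]; last by rewrite mulr_ge0.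
by move=> /allP /(_ j (mem_index_enum _)); rewrite mulf_eq0 gt_eqF //= => /eqP.
Qed.

Lemma inverse_col_unique l l' j : 0 < B l j -> 0 < B l' j -> l = l'.
Proof.
have [m Cjm] := row_nonzero_of_inverse j CB.
have at_m a : 0 < B a j -> a = m.
  move=> Baj; apply/eqP; apply: contraLR Cjm => am.
  by rewrite (inverse_offdiag0 am Baj) eqxx.
by move=> /at_m -> /at_m ->.
Qed.

Lemma nonneg_inverse_monomial :
  exists f : 'S_K, forall l j, (B l j != 0) = (j == f l).
Proof.
have row_pos i : exists k, 0 < B i k.
  by have [k Bik] := row_nonzero_of_inverse i BC; exists k; rewrite lt_def Bik B_ge0.
pose f i := xchoose (row_pos i).
have f_pos i : 0 < B i (f i) := xchooseP (row_pos i).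
have f_inj : injective f.
  by move=> a b fab; apply: (inverse_col_unique (f_pos a)); rewrite fab.
exists (perm f_inj) => l j; rewrite permE.
apply/idP/eqP => [Blj | ->]; last by rewrite gt_eqF.
have Blj_gt0 : 0 < B l j by rewrite lt_def Blj B_ge0.
have fj : f ((perm f_inj)^-1 j)%g = j by rewrite -permE permKV.
by move: Blj_gt0; rewrite -fj => /inverse_col_unique/(_ (f_pos _)) ->.
Qed.

End NonnegativeFactors.

(* If the support of B is the graph of f, then column f j of V B is column j
   of V scaled by the nonzero B j (f j): the supports correspond. *)
Lemma supp_mul_monomial (R : idomainType) (n K : nat) (V : 'M[R]_(n, K))
    (B : 'M[R]_K) (f : 'S_K) :
  (forall l j, (B l j != 0) = (j == f l)) ->
  forall i j, ((V *m B) i (f j) != 0) = (V i j != 0).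
Proof.
move=> suppB i j; rewrite mxE (bigD1 j) //= big1 ?addr0.
  by rewrite mulf_eq0 negb_or suppB eqxx andbT.
move=> l lj; have /negbTE Bl0 : f j != f l by apply: contra lj => /eqP/perm_inj ->.
by move: (suppB l (f j)); rewrite Bl0 => /negbFE/eqP ->; rewrite mulr0.
Qed.

Theorem proposition1 (R : realType) (n K : nat) (P : 'M[R]_n)
  (V Vt : 'M[R]_(n, K)) :
  P^T = P -> \rank P = K ->
  valid_V P V -> valid_V P Vt ->
  exists s : 'S_K, same_supp V (Vt *m perm_mx s).
Proof.
move=> _ rP [[rV [U PU]] [V_ge0 pureV]] [[rVt [Ut PUt]] [Vt_ge0 pureVt]].
have [B VtB] := colspace_factor rP rVt PU PUt.
have [C VC] := colspace_factor rP rV PUt PU.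
have BC : B *m C = 1%:M by apply: (full_col_rank_cancel rV); rewrite mulmxA -VtB.
have CB : C *m B = 1%:M by apply: (full_col_rank_cancel rVt); rewrite mulmxA -VC.
have B_ge0 a : forall b, 0 <= B a b.
  by apply: (pure_row_coeff_ge0 (pureV a)); rewrite -VtB.
have C_ge0 a : forall b, 0 <= C a b.
  by apply: (pure_row_coeff_ge0 (pureVt a)); rewrite -VC.
have [f suppB] := nonneg_inverse_monomial B_ge0 C_ge0 BC CB.
exists (f^-1)%g => i j.
by rewrite -col_permE mxE VtB supp_mul_monomial.
Qed.
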